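(* Let $\mathcal M$ be a $\Sigma$-module over a field $\mathbb F$ such that each $\mathcal M(n)$ has a basis $\mathcal B(n)$ stable under the action of $\Sigma_n$. For an object $(A,\beta)$ of $\beta(\mathcal M)$ set, for all ${\underline r}\in\mathrm{Comp}_p(n)$ and $[x]_{\underline r}\in\Sigma_{\underline r}\backslash\mathcal B(n)$, $\gamma_{[x]_{\underline r},{\underline r}}=\beta_{\mathscr O_{\Sigma_{\underline r}}([x]_{\underline r}),{\underline r}}$. Then $(A,\beta)\mapsto(A,\gamma)$ (identity on morphisms) defines a functor $P_{\mathcal M}:\beta(\mathcal M)\to\gamma(\mathcal M)$, and $P_{\mathcal M}$ is an isomorphism of categories.
   Context: $[n]=\{1,\dots,n\}$. A $\Sigma$-module is a sequence of $\mathbb F$-linear $\Sigma_n$-representations $\mathcal M(n)$. Compositions ${\underline r}=(r_1,\dots,r_p)\in\mathrm{Comp}_p(n)$ are tuples of nonnegative integers with sum $n$, identified with the partition of $[n]$ into consecutive intervals ${\underline r}_i$ of lengths $r_i$; $\Sigma_{\underline r}\subseteq\Sigma_n$ preserves each ${\underline r}_i$. For a group $H$ acting on a set, $[x]_H$, $\Omega_H(x)$, $\mathrm{Stab}_H(x)$ denote class, orbit, stabiliser; write $[x]_{\underline r},\mathrm{Stab}_{\underline r}$ for $H=\Sigma_{\underline r}$. $\mathscr O_{\Sigma_{\underline r}}([x]_{\underline r})=\sum_{y\in\Omega_{\Sigma_{\underline r}}(x)}y\in\mathcal M(n)^{\Sigma_{\underline r}}$. For $\rho\in\Sigma_p$: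 ${\underline r}^\rho=(r_{\rho^{-1}(1)},\dots,r_{\rho^{-1}(p)})$, $\rho^*\in\Sigma_n$ the block permutation with blocks of sizes $r_i$ associated to $\rho$. For ${\underline q}\in\mathrm{Comp}_s(p)$: ${\underline q}\rhd{\underline r}=(\sum_{i\in{\underline q}_1}r_i,\dots,\sum_{i\in{\underline q}_s}r_i)$. ${\underline r}\circ_1(l,m)=(l,m,r_2,\dots,r_p)$. Sums over $G/H$ are over left coset representatives. $\beta(\mathcal M)$: objects $(A,\beta)$ with $\beta_{x,{\underline r}}:A^{\times p}\to A$ for ${\underline r}\in\mathrm{Comp}_p(n)$, $x\in\mathcal M(n)^{\Sigma_{\underline r}}$, satisfying ($\beta$1) $\beta_{x,{\underline r}}(a_1,\dots,a_p)=\beta_{\rho^*\cdot x,{\underline r}^\rho}(a_{\rho^{-1}(1)},\dots,a_{\rho^{-1}(p)})$; ($\beta$2) $\beta_{x,(0,r_1,\dots,r_p)}(a_0,\dots,a_p)=\beta_{x,(r_1,\dots,r_p)}(a_1,\dots,a_p)$; ($\beta$3) $\beta_{x,{\underline r}}(\lambda a_1,a_2,\dots)=\lambda^{r_1}\beta_{x,{\underline r}}(a_1,a_2,\dots)$; ($\beta$4) for ${\underline q}\in\mathrm{Comp}_s(p)$, $\beta_{x,{\underline r}}$ at ($a_1$ repeated $q_1$ times, …, $a_s$ repeated $q_s$ times) equals $\beta_{\sum_{\sigma\in\Sigma_{{\underline q}\rhd{\underline r}}/\Sigma_{\underline r}}\sigma\cdot x,{\underline q}\rhd{\underline r}}(a_1,\dots,a_s)$;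 ($\beta$5) $\beta_{x,{\underline r}}(a_0+a_1,a_2,\dots)=\sum_{l+m=r_1}\beta_{x,{\underline r}\circ_1(l,m)}(a_0,a_1,a_2,\dots)$; ($\beta$6) $\beta_{\lambda x+y,{\underline r}}=\lambda\beta_{x,{\underline r}}+\beta_{y,{\underline r}}$. Morphisms: linear maps commuting with all operations. $\gamma(\mathcal M)$: objects $(A,\gamma)$ with $\gamma_{[x]_{\underline r},{\underline r}}:A^{\times p}\to A$ for ${\underline r}\in\mathrm{Comp}_p(n)$, $[x]_{\underline r}\in\Sigma_{\underline r}\backslash\mathcal B(n)$, satisfying ($\gamma$1) $\gamma_{[x]_{\underline r},{\underline r}}(a_1,\dots,a_p)=\gamma_{[\rho^*\cdot x]_{{\underline r}^\rho},{\underline r}^\rho}(a_{\rho^{-1}(1)},\dots,a_{\rho^{-1}(p)})$; ($\gamma$2) $\gamma_{[x]_{(0,{\underline r})},(0,{\underline r})}(a_0,a_1,\dots,a_p)=\gamma_{[x]_{\underline r},{\underline r}}(a_1,\dots,a_p)$; ($\gamma$3) $\gamma_{[x]_{\underline r},{\underline r}}(\lambda a_1,\dots)=\lambda^{r_1}\gamma_{[x]_{\underline r},{\underline r}}(a_1,\dots)$; ($\gamma$4) for ${\underline q}\in\mathrm{Comp}_s(p)$ and $x\in\mathcal B(n)$, $\gamma_{[x]_{\underline r},{\underline r}}$ at ($a_1$ repeated $q_1$ times, …, $a_s$ repeated $q_s$ times) equals $\frac{|\mathrm{Stab}_{{\underline q}\rhd{\underline r}}(x)|}{|\mathrm{Stab}_{\underline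 r}(x)|}\gamma_{[x]_{{\underline q}\rhd{\underline r}},{\underline q}\rhd{\underline r}}(a_1,\dots,a_s)$; ($\gamma$5) $\gamma_{[x]_{\underline r},{\underline r}}(a_0+a_1,a_2,\dots,a_p)=\sum_{l+m=r_1}\sum_{[y]\in\Sigma_{{\underline r}\circ_1(l,m)}\backslash\Omega_{\Sigma_{\underline r}}(x)}\gamma_{[y]_{{\underline r}\circ_1(l,m)},{\underline r}\circ_1(l,m)}(a_0,a_1,\dots,a_p)$. Morphisms: linear maps commuting with the operations. Integer coefficients are mapped into $\mathbb F$. *)

From HB Require Import structures.
From mathcomp Require Import all_boot all_order all_algebra all_fingroup.
Set Implicit Arguments. Unset Strict Implicit. Unset Printing Implicit Defensive.
Import GRing.Theory.
Local Open Scope ring_scope.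

(* A Sigma-module over F whose components M(n) have a basis B(n) stable under
   Sigma_n.  [act] is a genuine left action: (s * t)%g is "s then t" in
   MathComp, i.e. the composite t o s, and act (t o s) = act t o act s. *)
Record sigmaModB (F : fieldType) := SigmaModB {
  Mc : nat -> lmodType F;
  act : forall n, 'S_n -> Mc n -> Mc n;
  act_lin : forall n (s : 'S_n) (c : F) (u v : Mc n),
      act s (c *: u + v) = c *: act s u + act s v;
  act1 : forall n (v : Mc n), act 1%g v = v;
  actM : forall n (s t : 'S_n) (v : Mc n), act (s * t)%g v = act t (act s v);
  Bas : forall n, Mc n -> Prop;
  Bas_act : forall n (s : 'S_n) (b : Mc n), Bas b -> Bas (act s b);
  Bas_free : forall n (s : seq (Mc n)) (c : Mc n -> F), uniq s ->
      (forall b, b \in s -> Bas b) -> \sum_(b <- s) c b *: b = 0 ->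
      forall b, b \in s -> c b = 0;
  Bas_span : forall n (v : Mc n), exists2 s : seq (Mc n),
      (forall b, b \in s -> Bas b) & exists c : Mc n -> F, v = \sum_(b <- s) c b *: b
}.
Arguments Mc {F} _ _.
Arguments act {F _ n}.
Arguments Bas {F _ n}.

(* Compositions r = (r_1,...,r_p) are seq nat; positions of [n] are 0-based. *)
Definition off (r : seq nat) (i : nat) : nat := sumn (take i r).
(* index (0-based) of the interval of r containing the position i *)
Definition blk (r : seq nat) (i : nat) : nat :=
  count (fun j => (off r j.+1 <= i)%N) (iota 0 (size r)).
Definition youngS (n : nat) (r : seq nat) : {set 'S_n} :=
  [set s : 'S_n | [forall i : 'I_n, blk r (s i) == blk r i]].

Definition permseq (T : Type) (p : nat) (rho : 'S_p) (s : seq T) (d : T) : seq T :=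
  [seq nth d s ((rho^-1)%g j) | j <- enum 'I_p].
(* tau is the block permutation rho^* : block i of r goes, in order, to block
   rho(i) of r^rho *)
Definition is_blockperm (n p : nat) (rho : 'S_p) (r : seq nat) (tau : 'S_n) : Prop :=
  forall (i : 'I_p) (j : 'I_n), (off r i <= j < off r i + nth 0%N r i)%N ->
    val (tau j) = (off (permseq rho r 0%N) (rho i) + (j - off r i))%N.

Definition qrhd (q r : seq nat) : seq nat := [seq sumn s | s <- reshape q r].

Section Ops.
Variables (F : fieldType) (M : sigmaModB F).

Definition youngInv n (r : seq nat) (x : Mc M n) : Prop :=
  forall s, s \in youngS n r -> act s x = x.
Definition orbsum n (r : seq nat) (x : Mc M n) : Mc M n :=
  \sum_(y <- undup [seq act s x | s <- enum (youngS n r)]) y.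
Definition stab n (r : seq nat) (x : Mc M n) : {set 'S_n} :=
  [set s in youngS n r | act s x == x].
(* sum_{sigma in Sigma_{r'} / Sigma_r} sigma . x  (left cosets sigma Sigma_r,
   which are MathComp right cosets Sigma_r :* sigma) *)
Definition cosetsum n (r r' : seq nat) (x : Mc M n) : Mc M n :=
  \sum_(C in rcosets (youngS n r) (youngS n r')) act (repr C) x.
(* Sigma_{r'}-orbits in Omega_{Sigma_r}(x), each represented by the set of
   t in Sigma_r with t.x in that orbit *)
Definition orbclasses n (r' r : seq nat) (x : Mc M n) : {set {set 'S_n}} :=
  [set [set t in youngS n r | [exists u in youngS n r', act t x == act u (act s x)]]
    | s in youngS n r].

Variable A : lmodType F.
(* operations: ops n x [:: (r_1,a_1); ...; (r_p,a_p)] stands for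
   beta_{x,r}(a_1,...,a_p) (resp. gamma_{[x]_r,r}(a_1,...,a_p));
   only inputs with sumn r = n and x invariant (resp. x in B(n)) matter. *)
Definition ops := forall n, Mc M n -> seq (nat * A) -> A.

Definition fargs (A' : lmodType F) (f : A -> A') (ra : seq (nat * A)) :=
  [seq (p.1, f p.2) | p <- ra].

Definition isBeta (b : ops) : Prop :=
      (forall n (x : Mc M n) (ra : seq (nat * A)) (rho : 'S_(size ra)) (tau : 'S_n),
        sumn (unzip1 ra) = n -> youngInv (unzip1 ra) x ->
        is_blockperm rho (unzip1 ra) tau ->
        b n x ra = b n (act tau x) (permseq rho ra (0%N, 0))) /\
      (forall n (x : Mc M n) (a0 : A) ra, sumn (unzip1 ra) = n -> youngInv (unzip1 ra) x ->
        b n x ((0%N, a0) :: ra) = b n x ra) /\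
      (forall n (x : Mc M n) r1 (c : F) (a1 : A) ra, sumn (r1 :: unzip1 ra) = n ->
        youngInv (r1 :: unzip1 ra) x ->
        b n x ((r1, c *: a1) :: ra) = c ^+ r1 *: b n x ((r1, a1) :: ra)) /\
      (forall n (x : Mc M n) (r : seq nat) (qa : seq (nat * A)), sumn r = n ->
        sumn (unzip1 qa) = size r -> youngInv r x ->
        b n x (zip r (flatten [seq nseq p.1 p.2 | p <- qa])) =
        b n (cosetsum r (qrhd (unzip1 qa) r) x) (zip (qrhd (unzip1 qa) r) (unzip2 qa))) /\
      (forall n (x : Mc M n) r1 (a0 a1 : A) ra, sumn (r1 :: unzip1 ra) = n ->
        youngInv (r1 :: unzip1 ra) x ->
        b n x ((r1, a0 + a1) :: ra) =
        \sum_(l < r1.+1) b n x ((val l, a0) :: (r1 - l, a1)%N :: ra)) /\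
      (forall n (x y : Mc M n) (c : F) ra, sumn (unzip1 ra) = n ->
        youngInv (unzip1 ra) x -> youngInv (unzip1 ra) y ->
        b n (c *: x + y) ra = c *: b n x ra + b n y ra).

Definition isGamma (g : ops) : Prop :=
  (* well-definedness: gamma depends only on the class [x]_r *)
      (forall n (x : Mc M n) ra (s : 'S_n), sumn (unzip1 ra) = n -> Bas x ->
        s \in youngS n (unzip1 ra) -> g n (act s x) ra = g n x ra) /\
      (forall n (x : Mc M n) (ra : seq (nat * A)) (rho : 'S_(size ra)) (tau : 'S_n),
        sumn (unzip1 ra) = n -> Bas x ->
        is_blockperm rho (unzip1 ra) tau ->
        g n x ra = g n (act tau x) (permseq rho ra (0%N, 0))) /\
      (forall n (x : Mc M n) (a0 : A) ra, sumn (unzip1 ra) = n -> Bas x ->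
        g n x ((0%N, a0) :: ra) = g n x ra) /\
      (forall n (x : Mc M n) r1 (c : F) (a1 : A) ra, sumn (r1 :: unzip1 ra) = n ->
        Bas x ->
        g n x ((r1, c *: a1) :: ra) = c ^+ r1 *: g n x ((r1, a1) :: ra)) /\
      (forall n (x : Mc M n) (r : seq nat) (qa : seq (nat * A)), sumn r = n ->
        sumn (unzip1 qa) = size r -> Bas x ->
        g n x (zip r (flatten [seq nseq p.1 p.2 | p <- qa])) =
        ((#|stab (qrhd (unzip1 qa) r) x| %/ #|stab r x|)%N%:R : F) *:
          g n x (zip (qrhd (unzip1 qa) r) (unzip2 qa))) /\
      (forall n (x : Mc M n) r1 (a0 a1 : A) ra, sumn (r1 :: unzip1 ra) = n ->
        Bas x ->
        g n x ((r1, a0 + a1) :: ra) =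
        \sum_(l < r1.+1)
          \sum_(C in orbclasses (val l :: (r1 - l)%N :: unzip1 ra) (r1 :: unzip1 ra) x)
            g n (act (repr C) x) ((val l, a0) :: (r1 - l, a1)%N :: ra)).

Definition gammaOf (b : ops) : ops :=
  fun n x ra => b n (orbsum (unzip1 ra) x) ra.

End Ops.
Arguments gammaOf {F M A} b n x ra.

Definition isBetaMor (F : fieldType) (M : sigmaModB F) (A A' : lmodType F)
    (b : ops M A) (b' : ops M A') (f : A -> A') : Prop :=
  forall n (x : Mc M n) ra, sumn (unzip1 ra) = n -> youngInv (unzip1 ra) x ->
    f (b n x ra) = b' n x (fargs f ra).

Definition isGammaMor (F : fieldType) (M : sigmaModB F) (A A' : lmodType F)
    (g : ops M A) (g' : ops M A') (f : A -> A') : Prop :=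
  forall n (x : Mc M n) ra, sumn (unzip1 ra) = n -> Bas x ->
    f (g n x ra) = g' n x (fargs f ra).

(* Since B(n) is a Sigma_n-stable basis, the sums of the Sigma_r-orbits in B(n) form
   a basis of the invariants M(n)^{Sigma_r}.  An operation beta_{-,r} is linear in its
   invariant argument (beta6), so it is determined by its values gamma on these orbit
   sums, and conversely any gamma extends linearly to a beta (evaluating gamma at one
   chosen representative per orbit); morphisms are compared the same way.  The axioms
   (beta1)-(beta5) then translate into (gamma1)-(gamma5) through three facts about
   orbit sums: the block permutation rho^* conjugates Sigma_r onto Sigma_{r^rho};
   the sum of sigma.O_{Sigma_r}(x) over Sigma_{r'}/Sigma_r is
   |Stab_{r'}(x)|/|Stab_r(x)| times O_{Sigma_{r'}}(x), because each point of the
   Sigma_{r'}-orbit of x is hit that many times; and a Sigma_r-orbit is the disjoint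
   union of Sigma_{r o_1 (l,m)}-orbits. *)

From Pilot Require Import Defs.
From Stdlib Require Import ClassicalEpsilon.
From HB Require Import structures.
From mathcomp Require Import all_boot all_order all_algebra all_fingroup zify.
Import GRing.Theory.
Local Open Scope ring_scope.
Import Pilot.Defs.
Set Implicit Arguments. Unset Strict Implicit. Unset Printing Implicit Defensive.

Section SeqSums.
Variable V : nmodType.

Lemma big_uniq_subset (T : eqType) (L L' : seq T) (f : T -> V) :
  uniq L -> uniq L' -> {subset L <= L'} -> {in L', forall y, y \notin L -> f y = 0} ->
  \sum_(y <- L') f y = \sum_(y <- L) f y.
Proof.
move=> uL uL' LL' f0; rewrite (bigID (mem L)) /= [X in _ + X]big1_seq ?addr0; last first.
  by move=> y /andP[yL yL']; apply: f0.
rewrite -big_filter; apply/perm_big/uniq_perm; rewrite ?filter_uniq // => y.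
by rewrite mem_filter andb_idr //; apply: LL'.
Qed.

Lemma big_fibers_seq (T T' : eqType) (L : seq T) (k : T -> T') (f : T -> V) :
  \sum_(y <- L) f y = \sum_(z <- undup (map k L)) \sum_(y <- L | k y == z) f y.
Proof.
under [RHS]eq_bigr do rewrite big_mkcond.
rewrite exchange_big /=; apply: eq_big_seq => y yL.
rewrite -big_mkcond -big_filter /=.
under eq_filter do rewrite eq_sym.
by rewrite filter_pred1_uniq ?undup_uniq ?mem_undup ?map_f // big_seq1.
Qed.

Lemma big_undup_count (T : eqType) (L : seq T) (f : T -> V) :
  \sum_(v <- L) f v = \sum_(v <- undup L) f v *+ count_mem v L.
Proof.
rewrite (big_fibers_seq _ id) map_id; apply: eq_bigr => z _.
rewrite (eq_bigr (fun _ => f z)); last by move=> y /eqP ->.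
by rewrite big_const_seq iter_addr_0.
Qed.

End SeqSums.

Lemma sum_rcosets_const (gT : finGroupType) (H K : {group gT}) (f : gT -> nat) :
  H \subset K -> (forall h d, h \in H -> f (h * d)%g = f d) ->
  (\sum_(d in K) f d = #|H| * \sum_(D in rcosets H K) f (repr D))%N.
Proof.
move=> HK fH; rewrite (set_partition_big _ (rcosets_partition HK)) /= big_distrr /=.
apply: eq_bigr => _ /rcosetsP [k kK ->].
have fk d : d \in (H :* k)%g -> f d = f k by case/rcosetP => h hH ->; apply: fH.
by rewrite (eq_bigr (fun _ => f k)) ?sum_nat_const ?card_rcoset ?fk ?mem_repr_rcoset.
Qed.

(** * Orbits of the permutation action *)

Section Action.
Variables (F : fieldType) (M : sigmaModB F) (n : nat).
Local Notation V := (Mc M n).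

Fact act_is_linear (s : 'S_n) : linear (@act F M n s).
Proof. by move=> c u v; rewrite act_lin. Qed.
HB.instance Definition _ (s : 'S_n) :=
  GRing.isLinear.Build F V V _ (@act F M n s) (act_is_linear s).

Lemma actK (s : 'S_n) : cancel (@act F M n s) (act s^-1).
Proof. by move=> v; rewrite -actM mulgV act1. Qed.

Lemma actKV (s : 'S_n) : cancel (@act F M n s^-1) (act s).
Proof. by move=> v; rewrite -actM mulVg act1. Qed.

Lemma act_inj (s : 'S_n) : injective (@act F M n s).
Proof. exact: can_inj (@actK s). Qed.

Definition orbseq (H : {set 'S_n}) (y : V) : seq V := undup [seq act s y | s <- enum H].
Definition orbitsum (H : {set 'S_n}) (y : V) : V := \sum_(w <- orbseq H y) w.

Lemma orbsumE r (x : V) : orbsum r x = orbitsum (youngS n r) x.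
Proof. by []. Qed.

Lemma orbseqP (H : {set 'S_n}) (y z : V) :
  reflect (exists2 s, s \in H & z = act s y) (z \in orbseq H y).
Proof.
rewrite mem_undup; apply: (iffP mapP) => [[s]|[s]]; rewrite ?mem_enum => sH ->;
  by exists s; rewrite ?mem_enum.
Qed.

Lemma orbseq_uniq (H : {set 'S_n}) (y : V) : uniq (orbseq H y).
Proof. exact: undup_uniq. Qed.

Lemma Bas_orbseq (H : {set 'S_n}) (y z : V) : Bas y -> z \in orbseq H y -> Bas z.
Proof. by move=> By /orbseqP [s _ ->]; apply: Bas_act. Qed.

Lemma orbseq_subset (H K : {set 'S_n}) (y : V) :
  K \subset H -> {subset orbseq K y <= orbseq H y}.
Proof.
by move=> KH z /orbseqP [u uK ->]; apply/orbseqP; exists u => //; apply: (subsetP KH).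
Qed.

Variable H : {group 'S_n}.

Lemma orbseq_id (y : V) : y \in orbseq H y.
Proof. by apply/orbseqP; exists 1%g; rewrite ?group1 ?act1. Qed.

Lemma orbseq_act (y : V) s : s \in H -> act s y \in orbseq H y.
Proof. by move=> sH; apply/orbseqP; exists s. Qed.

Lemma orbseq_sym (y z : V) : z \in orbseq H y -> y \in orbseq H z.
Proof.
by case/orbseqP => s sH ->; apply/orbseqP; exists s^-1%g; rewrite ?groupV ?actK.
Qed.

Lemma orbseq_trans (y z w : V) :
  z \in orbseq H y -> w \in orbseq H z -> w \in orbseq H y.
Proof.
case/orbseqP => s sH -> /orbseqP [t tH ->]; apply/orbseqP; exists (s * t)%g;
  by rewrite ?groupM ?actM.
Qed.

Lemma orbseq_eq (y z : V) : z \in orbseq H y -> orbseq H z =i orbseq H y.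
Proof.
move=> zy w; apply/idP/idP => [wz|wy]; first exact: orbseq_trans wz.
exact: orbseq_trans (orbseq_sym zy) wy.
Qed.

Lemma mem_orbseq_act (y z : V) s : s \in H ->
  (act s z \in orbseq H y) = (z \in orbseq H y).
Proof.
move=> sH; apply/idP/idP => zy; last exact: orbseq_trans zy (orbseq_act _ sH).
by rewrite -(actK s z); apply: orbseq_trans zy _; rewrite orbseq_act ?groupV.
Qed.

Lemma orbitsum_eq (y z : V) : z \in orbseq H y -> orbitsum H z = orbitsum H y.
Proof.
by move=> zy; apply/perm_big/uniq_perm; rewrite ?orbseq_uniq //; apply: orbseq_eq.
Qed.

Lemma act_orbitsum (y : V) s : s \in H -> act s (orbitsum H y) = orbitsum H y.
Proof.
move=> sH; rewrite raddf_sum -(big_map (act s) xpredT id).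
apply/perm_big/uniq_perm; rewrite ?orbseq_uniq ?map_inj_uniq ?orbseq_uniq //;
  first exact: act_inj.
move=> w; apply/mapP/idP => [[z zy ->]|wy]; first by rewrite mem_orbseq_act.
by exists (act s^-1 w); rewrite ?actKV ?mem_orbseq_act ?groupV.
Qed.

Definition orbrep (y : V) : V := choose (mem (orbseq H y)) y.

Lemma orbrep_in (y : V) : orbrep y \in orbseq H y.
Proof. exact/chooseP/orbseq_id. Qed.

Lemma orbrep_eq (y z : V) : z \in orbseq H y -> orbrep z = orbrep y.
Proof.
by move=> zy; rewrite /orbrep (eq_choose (orbseq_eq zy)) (choose_id _ (orbseq_id _)).
Qed.

End Action.

(** * Young subgroups *)

Section YoungSubgroups.
Local Open Scope nat_scope.

Lemma young_group_set n r : group_set (youngS n r).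
Proof.
apply/group_setP; split; first by rewrite inE; apply/forallP => i; rewrite perm1.
move=> s t; rewrite !inE => /forallP sP /forallP tP; apply/forallP => i.
by rewrite permM (eqP (tP _)) (eqP (sP _)).
Qed.
Canonical young_group n r := Group (young_group_set n r).

Lemma off0 r : off r 0 = 0.
Proof. by rewrite /off take0. Qed.

Lemma off_cons a r i : off (a :: r) i.+1 = a + off r i.
Proof. by []. Qed.

Lemma off_size r : off r (size r) = sumn r.
Proof. by rewrite /off take_size. Qed.

Lemma off_S r i : i < size r -> off r i.+1 = off r i + nth 0 r i.
Proof. by move=> ir; rewrite /off (take_nth 0 ir) sumn_rcons. Qed.

Lemma blk_cons a r i : blk (a :: r) i = if a <= i then (blk r (i - a)).+1 else 0.
Proof.
rewrite /blk /= -[1]addn0 iotaDl count_map addn0 off_cons off0 addn0.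
case: (leqP a i) => ai.
  rewrite add1n; congr S; apply: eq_count => j /=; rewrite add1n off_cons; lia.
rewrite add0n; apply/eqP; rewrite eqn0Ngt -has_count; apply/hasPn => j _ /=.
rewrite add1n off_cons; lia.
Qed.

Lemma leq_blk r m i : m <= size r -> (m <= blk r i) = (off r m <= i).
Proof.
elim: r m i => [|a r IH] [|m] i //= msz; rewrite blk_cons off_cons.
case: (leqP a i) => ai; first by rewrite ltnS IH //; apply/idP/idP; lia.
by rewrite ltn0; apply/esym/negbTE; lia.
Qed.

Lemma blk_lt r i : i < sumn r -> blk r i < size r.
Proof. by move=> ir; rewrite ltnNge leq_blk // off_size -ltnNge. Qed.

Lemma blk_eq r k i : k < size r -> off r k <= i < off r k + nth 0 r k -> blk r i = k.
Proof.
move=> kr /andP [h1 h2]; apply/eqP; rewrite eqn_leq leq_blk ?h1 ?(ltnW kr) // andbT.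
by rewrite leqNgt leq_blk // off_S // -ltnNge.
Qed.

Lemma blk_cat r1 r2 i : blk (r1 ++ r2) i =
  if sumn r1 <= i then size r1 + blk r2 (i - sumn r1) else blk r1 i.
Proof.
elim: r1 i => [|a r1 IH] i /=; first by rewrite subn0.
rewrite !blk_cons IH; case: (leqP a i) => ai; last by case: ifP; lia.
case: (leqP (sumn r1) (i - a)) => h; last by case: ifP; lia.
by rewrite ifT ?subnDA //; lia.
Qed.

Lemma blk_qrhd q r i j : blk r i = blk r j -> blk (qrhd q r) i = blk (qrhd q r) j.
Proof.
elim: q r i j => [|k q IH] r i j //.
rewrite -{1 2}(cat_take_drop k r) !blk_cat /qrhd /= !blk_cons -/(qrhd q (drop k r)).
set S := sumn (take k r).
case: (leqP S i) => hi; case: (leqP S j) => hj //.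
- by move/eqP; rewrite eqn_add2l => /eqP /IH ->.
- by move=> e; have := blk_lt hj; rewrite -e; lia.
- by move=> e; have := blk_lt hi; rewrite e; lia.
Qed.

Lemma youngS_qrhd n q r : youngS n r \subset youngS n (qrhd q r).
Proof.
apply/subsetP => s; rewrite !inE => /forallP sP; apply/forallP => i.
by rewrite (blk_qrhd q (eqP (sP i))).
Qed.

Lemma blk_refine l r1 r i : l <= r1 ->
  blk (r1 :: r) i = (blk (l :: (r1 - l) :: r) i).-1.
Proof.
move=> lr; rewrite !blk_cons.
case: (leqP l i) => li; case: (leqP r1 i) => ri /=; try lia.
- by rewrite ifT; [congr (blk _ _).+1|]; lia.
- by rewrite ifF //; lia.
Qed.

Lemma youngS_refine n l r1 r : l <= r1 ->
  youngS n (l :: (r1 - l) :: r) \subset youngS n (r1 :: r).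
Proof.
move=> lr; apply/subsetP => s; rewrite !inE => /forallP sP; apply/forallP => i.
by rewrite (blk_refine r (s i) lr) (blk_refine r i lr) (eqP (sP i)).
Qed.

Lemma youngS0 n r : youngS n (0 :: r) = youngS n r.
Proof.
apply/setP => s; rewrite !inE.
by apply/forallP/forallP => h i; move: (h i); rewrite !blk_cons !subn0.
Qed.

End YoungSubgroups.

Section CompositionLists.

Lemma unzip1_permseq (T1 T2 : Type) p (rho : 'S_p) (s : seq (T1 * T2)) d1 d2 :
  unzip1 (permseq rho s (d1, d2)) = permseq rho (unzip1 s) d1.
Proof.
rewrite /permseq {1}/unzip1 -map_comp; apply: eq_map => j /=.
case: (ltnP (rho^-1 j)%g (size s)) => js; first by rewrite (nth_map (d1, d2)).
by rewrite !nth_default ?size_map.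
Qed.

Lemma perm_permseq (T : eqType) p (rho : 'S_p) (s : seq T) d :
  size s = p -> perm_eq (permseq rho s d) s.
Proof.
move=> sp.
have -> : permseq rho s d = map (nth d s) (map val (map (rho^-1)%g (enum 'I_p))).
  by rewrite /permseq -!map_comp.
have {2}-> : s = map (nth d s) (map val (enum 'I_p)).
  by rewrite val_enum_ord -sp; exact/esym/mkseq_nth.
do 2!apply: perm_map; apply: uniq_perm; rewrite ?enum_uniq //.
  by rewrite map_inj_uniq ?enum_uniq //; apply: perm_inj.
by move=> j; rewrite mem_enum; apply/mapP; exists (rho j); rewrite ?mem_enum ?permK.
Qed.

Lemma sumn_permseq p (rho : 'S_p) (s : seq nat) d :
  size s = p -> sumn (permseq rho s d) = sumn s.
Proof. by move=> sp; rewrite !sumnE; apply/perm_big/perm_permseq. Qed.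

Lemma size_flatten_nseq (T : Type) (qa : seq (nat * T)) :
  size (flatten [seq nseq p.1 p.2 | p <- qa]) = sumn (unzip1 qa).
Proof. by elim: qa => //= [[q a] qa IH]; rewrite size_cat size_nseq IH. Qed.

Lemma sumn_qrhd q r : (size r <= sumn q)%N -> sumn (qrhd q r) = sumn r.
Proof. by move=> h; rewrite /qrhd -sumn_flatten reshapeKr. Qed.

Lemma size_qrhd q r : size (qrhd q r) = size q.
Proof. by rewrite size_map size_reshape. Qed.

Lemma unzip1_fargs (F : fieldType) (A A' : lmodType F) (f : A -> A') ra :
  unzip1 (fargs f ra) = unzip1 ra.
Proof. by elim: ra => //= -[r a] ra ->. Qed.

End CompositionLists.

Section BlockPermutation.

Lemma nth_permseq (T : Type) p (rho : 'S_p) (s : seq T) d (j : 'I_p) :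
  nth d (permseq rho s d) j = nth d s (rho^-1 j)%g.
Proof. by rewrite /permseq (nth_map j) ?size_enum_ord // nth_ord_enum. Qed.

Lemma size_permseq (T : Type) p (rho : 'S_p) (s : seq T) d : size (permseq rho s d) = p.
Proof. by rewrite size_map size_enum_ord. Qed.

Variables (n p : nat) (rho : 'S_p) (r : seq nat) (tau : 'S_n).
Hypotheses (sr : size r = p) (sn : sumn r = n) (bp : is_blockperm rho r tau).
Local Notation r' := (permseq rho r 0%N).

Lemma blk_blockperm (j : 'I_n) :
  exists i : 'I_p, blk r j = i /\ blk r' (tau j) = rho i.
Proof.
have jn : (j < sumn r)%N by rewrite sn.
have ip : (blk r j < p)%N by rewrite -sr blk_lt.
exists (Ordinal ip); split => //.
have hi : (off r (blk r j) <= j < off r (blk r j) + nth 0%N r (blk r j))%N.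
  rewrite -leq_blk ?leqnn ?sr ?(ltnW ip) //=.
  by rewrite -off_S ?sr // ltnNge -leq_blk ?sr // ltnn.
rewrite (@bp (Ordinal ip) j hi); apply: blk_eq; first by rewrite size_permseq.
by rewrite nth_permseq permK /= leq_addr ltn_add2l ltn_subLR //; case/andP: hi.
Qed.

Lemma youngS_conj (s : 'S_n) :
  ((tau^-1 * s * tau)%g \in youngS n r') = (s \in youngS n r).
Proof.
rewrite !inE; apply/forallP/forallP => sP j.
  have := eqP (sP (tau j)); rewrite !permM permK.
  have [i0 [-> ->]] := blk_blockperm j; have [i1 [-> ->]] := blk_blockperm (s j).
  by move=> /val_inj /perm_inj ->.
rewrite !permM.
have [i0 [e0 f0]] := blk_blockperm (tau^-1 j)%g.
have [i1 [e1 f1]] := blk_blockperm (s (tau^-1 j))%g.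
rewrite permKV in f0; rewrite f0 f1; apply/eqP; congr (nat_of_ord (rho _)).
by apply: val_inj; rewrite /= -e0 -e1 (eqP (sP _)).
Qed.

End BlockPermutation.

(** * Orbit sums *)

Lemma orbsum_blockperm (F : fieldType) (M : sigmaModB F) n p (rho : 'S_p) r
    (tau : 'S_n) (x : Mc M n) :
  size r = p -> sumn r = n -> is_blockperm rho r tau ->
  orbsum (permseq rho r 0%N) (act tau x) = act tau (orbsum r x).
Proof.
move=> sr sn bp; rewrite /orbsum raddf_sum -(big_map (act tau) xpredT id).
apply/perm_big/uniq_perm; rewrite ?undup_uniq ?map_inj_uniq ?undup_uniq //;
  first exact: act_inj.
move=> z; rewrite mem_undup; apply/mapP/mapP.
  case=> s; rewrite mem_enum => sH ->.
  exists (act (tau * s * tau^-1)%g x); last by rewrite -!actM mulgKV.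
  rewrite mem_undup; apply/mapP; exists (tau * s * tau^-1)%g => //.
  by rewrite mem_enum -(youngS_conj sr sn bp) !mulgA mulVg mul1g mulgKV.
case=> y; rewrite mem_undup => /mapP [s]; rewrite mem_enum => sH -> ->.
exists (tau^-1 * s * tau)%g; first by rewrite mem_enum youngS_conj.
by rewrite -!actM !mulgA mulgV mul1g.
Qed.

Section OrbitSplit.
Variables (F : fieldType) (M : sigmaModB F) (n : nat) (H K : {group 'S_n}).
Hypothesis KH : K \subset H.
Variable x : Mc M n.

Definition orbclass (w : Mc M n) : {set 'S_n} :=
  [set t in H | [exists u in K, act t x == act u w]].

Lemma orbclassE w t : (t \in orbclass w) = (t \in H) && (act t x \in orbseq K w).
Proof.
rewrite inE; congr (_ && _); apply/existsP/orbseqP => [[u /andP [uK /eqP ->]]|[u uK ->]].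
  by exists u.
by exists u; rewrite uK eqxx.
Qed.

Lemma orbclass_eq (w1 w2 : Mc M n) : w1 \in orbseq H x ->
  (orbclass w1 == orbclass w2) = (w1 \in orbseq K w2).
Proof.
case/orbseqP => s1 s1H ->; apply/eqP/idP => [e|h].
  have : s1 \in orbclass (act s1 x) by rewrite orbclassE s1H orbseq_id.
  by rewrite e orbclassE => /andP [].
apply/setP => t; rewrite !orbclassE; case: (t \in H) => //=.
apply/idP/idP => h2; first exact: orbseq_trans h h2.
exact: orbseq_trans (orbseq_sym h) h2.
Qed.

Lemma orbitsum_split :
  orbitsum H x = \sum_(C in [set orbclass (act s x) | s in H]) orbitsum K (act (repr C) x).
Proof.
rewrite /orbitsum (big_fibers_seq _ orbclass) -big_enum /=.
rewrite [RHS](perm_big (undup (map orbclass (orbseq H x)))); last first.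
  apply: uniq_perm; rewrite ?enum_uniq ?undup_uniq // => C.
  rewrite mem_enum mem_undup.
  apply/imsetP/mapP => [[s sH ->]|[w /orbseqP [s sH ->] ->]]; last by exists s.
  by exists (act s x); rewrite ?orbseq_act.
apply: eq_big_seq => C; rewrite mem_undup => /mapP [w0 w0H ->].
rewrite -big_filter; apply/perm_big/uniq_perm; rewrite ?filter_uniq ?orbseq_uniq //.
have : repr (orbclass w0) \in orbclass w0.
  case/orbseqP: (w0H) => s sH ->; apply: (@mem_repr _ _ s).
  by rewrite orbclassE sH orbseq_id.
set t := repr _.
rewrite orbclassE => /andP [tH tw0].
have tx : act t x \in orbseq H x by apply: orbseq_act.
have ek : orbclass (act t x) = orbclass w0 by apply/eqP; rewrite orbclass_eq.
move=> w; rewrite mem_filter; apply/andP/idP => [[/eqP e wH]|wt].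
  by rewrite -(orbclass_eq _ wH) ek e.
have wH : w \in orbseq H x by apply: orbseq_trans tx (orbseq_subset KH wt).
by rewrite -ek orbclass_eq.
Qed.

End OrbitSplit.

Lemma orbsum_refine (F : fieldType) (M : sigmaModB F) n l r1 r (x : Mc M n) :
  (l <= r1)%N ->
  orbsum (r1 :: r) x = \sum_(C in orbclasses (l :: (r1 - l)%N :: r) (r1 :: r) x)
                          orbsum (l :: (r1 - l)%N :: r) (act (repr C) x).
Proof. by move=> lr; exact: (orbitsum_split (youngS_refine n r lr) x). Qed.

Lemma orbsum_cons0 (F : fieldType) (M : sigmaModB F) n r (x : Mc M n) :
  orbsum (0%N :: r) x = orbsum r x.
Proof. by rewrite /orbsum youngS0. Qed.

Section CosetSum.
Variables (F : fieldType) (M : sigmaModB F) (n : nat).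
Local Notation V := (Mc M n).

Definition stabset (G : {set 'S_n}) (x : V) : {set 'S_n} := [set s in G | act s x == x].

Lemma stabset_group_set (G : {group 'S_n}) x : group_set (stabset G x).
Proof.
apply/group_setP; split; first by rewrite inE group1 act1 eqxx.
move=> s t; rewrite !inE => /andP [sG /eqP sx] /andP [tG /eqP tx].
by rewrite groupM // actM sx tx eqxx.
Qed.
Canonical stabset_group (G : {group 'S_n}) x := Group (stabset_group_set G x).

Variables (H K : {group 'S_n}).
Hypothesis HK : H \subset K.
Variable x : V.

Lemma stabsetIr : stabset K x :&: H = stabset H x.
Proof.
apply/setP => s; rewrite !inE; case sH: (s \in H); rewrite ?andbF ?andbT //=.
by rewrite (subsetP HK).
Qed.

Section Hits.
Variable g : 'S_n.
Hypothesis gK : g \in K.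

(* [\sum_(D in rcosets H K) hits (repr D)] is the number of translates
   [repr D (H x)] of the H-orbit of x that contain [g x]. *)
Definition hits (d : 'S_n) : bool := act d^-1 (act g x) \in orbseq H x.

Lemma hitsM h d : h \in H -> hits (h * d)%g = hits d.
Proof. by move=> hH; rewrite /hits invMg actM mem_orbseq_act // groupV. Qed.

Lemma hits_mulg d : (d \in K) && hits d = ((g * d^-1)%g \in (stabset K x * H)%g).
Proof.
have sub : (stabset K x * H \subset K)%g.
  by apply: mul_subG => //; apply/subsetP => s; rewrite inE => /andP [].
rewrite /hits -actM; apply/andP/idP => [[dK /orbseqP [h hH e]]|m].
  have hK : h \in K by apply: (subsetP HK).
  rewrite -(mulgKV h (g * d^-1)%g) mem_mulg //.
  by rewrite inE !groupM ?groupV //= actM e -actM mulgV act1.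
have := subsetP sub _ m; rewrite groupMl // groupV => dK; split => //.
case/mulsgP: m => s h; rewrite inE => /andP [sK /eqP sx] hH ->.
by rewrite actM sx orbseq_act.
Qed.

Lemma count_hits :
  ((\sum_(D in rcosets H K) hits (repr D)) * #|stabset H x| = #|stabset K x|)%N.
Proof.
have sum_hits : (\sum_(d in K) hits d = #|(stabset K x * H)%g|)%N.
  rewrite -(card_preimset _ (f := fun d => (g * d^-1)%g)); last first.
    by move=> d1 d2 /mulgI /invg_inj.
  rewrite -sum1_card big_mkcond [RHS]big_mkcond /=; apply: eq_bigr => d _.
  by rewrite inE -hits_mulg; case: (d \in K); case: (hits d).
apply/eqP; rewrite -(eqn_pmul2l (cardG_gt0 H)) mulnA.
rewrite -(@sum_rcosets_const _ _ _ (fun d => nat_of_bool (hits d)) HK); last first.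
  by move=> h d hH; rewrite hitsM.
by rewrite sum_hits -stabsetIr -(mul_cardG (stabset_group K x) H) mulnC.
Qed.

End Hits.

Lemma repr_rcoset_in k : k \in K -> repr (H :* k)%g \in K.
Proof.
move=> kK; have := mem_repr_rcoset H k; rewrite mem_rcoset => h.
by rewrite -(mulgKV k (repr _)) groupM // (subsetP HK).
Qed.

Lemma coset_sum_orbitsum :
  \sum_(D in rcosets H K) act (repr D) (orbitsum H x) =
  (#|stabset K x| %/ #|stabset H x|)%:R *: orbitsum K x.
Proof.
set translates := flatten [seq map (act (repr D)) (orbseq H x) | D <- enum (rcosets H K)].
have -> : \sum_(D in rcosets H K) act (repr D) (orbitsum H x) = \sum_(v <- translates) v.
  rewrite big_flatten big_map big_enum /=; apply: eq_bigr => D _.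
  by rewrite raddf_sum big_map.
have translates_orbit : undup translates =i orbseq K x.
  move=> v; rewrite mem_undup; apply/flattenP/orbseqP.
    case=> s /mapP [D]; rewrite mem_enum => /rcosetsP [k kK ->] -> /mapP [w].
    move=> /orbseqP [h hH ->] ->; exists (h * repr (H :* k))%g; last by rewrite actM.
    by rewrite groupM ?repr_rcoset_in // (subsetP HK).
  case=> g gK ->; exists (map (act (repr (H :* g)%g)) (orbseq H x)).
    by apply/mapP; exists (H :* g)%g; rewrite // mem_enum; apply/rcosetsP; exists g.
  have := mem_repr_rcoset H g; rewrite mem_rcoset => h.
  apply/mapP; exists (act (g * (repr (H :* g)%g)^-1)%g x); last by rewrite -actM mulgKV.
  by apply: orbseq_act; rewrite -[X in X \in H]invgK invMg invgK groupV.
have count_translates v : v \in orbseq K x ->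
    count_mem v translates = (#|stabset K x| %/ #|stabset H x|)%N.
  case/orbseqP => g gK ->.
  rewrite -(count_hits gK) mulnK ?(cardG_gt0 (stabset_group H x)) //.
  rewrite count_flatten -map_comp sumnE big_map big_enum /=.
  apply: eq_bigr => D _; rewrite /= count_uniq_mem ?map_inj_uniq ?orbseq_uniq //;
    last exact: act_inj.
  by rewrite /hits -{1}(actKV (repr D) (act g x)) mem_map //; apply: act_inj.
rewrite big_undup_count (eq_big_seq (fun v => v *+ (#|stabset K x| %/ #|stabset H x|)));
  last by move=> v; rewrite translates_orbit => /count_translates ->.
rewrite sumrMnl scaler_nat; congr (_ *+ _).
by apply/perm_big/uniq_perm; rewrite ?undup_uniq ?orbseq_uniq.
Qed.

End CosetSum.

Lemma cosetsum_orbsum (F : fieldType) (M : sigmaModB F) n r r' (x : Mc M n) :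
  youngS n r \subset youngS n r' ->
  cosetsum r r' (orbsum r x) = (#|stab r' x| %/ #|stab r x|)%:R *: orbsum r' x.
Proof. by move=> rr'; exact: (coset_sum_orbitsum rr' x). Qed.

(** * Coordinates in the basis *)

Section Coordinates.
Variables (F : fieldType) (M : sigmaModB F) (n : nat).
Local Notation V := (Mc M n).

Lemma exists_basis_expansion (v : V) : exists p : seq V * (V -> F),
  [/\ uniq p.1, {in p.1, forall b, Bas b} & v = \sum_(b <- p.1) p.2 b *: b].
Proof.
have [s sB [c ->]] := Bas_span v.
exists (undup s, fun b => c b *+ count_mem b s); split => /=.
- exact: undup_uniq.
- by move=> b; rewrite mem_undup; apply: sB.
by rewrite big_undup_count; apply: eq_bigr => b _; rewrite scalerMnl.
Qed.

Definition expansion (v : V) : seq V * (V -> F) :=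
  proj1_sig (constructive_indefinite_description _ (exists_basis_expansion v)).
Definition bsupp (v : V) : seq V := (expansion v).1.
Definition coord (v : V) (y : V) : F := if y \in bsupp v then (expansion v).2 y else 0.

Lemma expansionP v : [/\ uniq (bsupp v), {in bsupp v, forall b, Bas b} &
   v = \sum_(b <- bsupp v) (expansion v).2 b *: b].
Proof.
exact: (proj2_sig (constructive_indefinite_description _ (exists_basis_expansion v))).
Qed.

Lemma bsupp_uniq v : uniq (bsupp v). Proof. by case: (expansionP v). Qed.

Lemma Bas_bsupp v b : b \in bsupp v -> Bas b. Proof. by case: (expansionP v) => _ /(_ b). Qed.

Lemma coord_out v y : y \notin bsupp v -> coord v y = 0.
Proof. by rewrite /coord => /negbTE ->. Qed.

Lemma coord_span (L : seq V) v : uniq L -> {subset bsupp v <= L} ->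
  v = \sum_(b <- L) coord v b *: b.
Proof.
move=> uL sub; rewrite (big_uniq_subset (bsupp_uniq v) uL sub); last first.
  by move=> y _ ys; rewrite coord_out // scale0r.
case: (expansionP v) => _ _ {1}->; apply: eq_big_seq => b bs.
by rewrite /coord bs.
Qed.

Lemma coord_sum_free (L : seq V) (d : V -> F) v : uniq L -> {in L, forall b, Bas b} ->
  v = \sum_(b <- L) d b *: b -> forall y, coord v y = if y \in L then d y else 0.
Proof.
move=> uL LB ev y.
set L' := undup (L ++ bsupp v).
have uL' : uniq L' by apply: undup_uniq.
have subL : {subset L <= L'} by move=> b bL; rewrite mem_undup mem_cat bL.
have subS : {subset bsupp v <= L'} by move=> b bL; rewrite mem_undup mem_cat bL orbT.
have z : \sum_(b <- L') ((if b \in L then d b else 0) - coord v b) *: b = 0.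
  under eq_bigr do rewrite scalerBl.
  rewrite sumrB -(coord_span uL' subS) (big_uniq_subset uL uL' subL); last first.
    by move=> b _ /negbTE ->; rewrite scale0r.
  by rewrite [X in X - _](eq_big_seq (fun b => d b *: b)) -?ev ?subrr // => b ->.
have L'B b : b \in L' -> Bas b by rewrite mem_undup mem_cat => /orP [/LB|/Bas_bsupp].
have := @Bas_free F M n L' _ uL' L'B z y.
case yL' : (y \in L'); first by move=> /(_ erefl) /eqP; rewrite subr_eq0 => /eqP <-.
move=> _; rewrite ifF ?coord_out //; apply/negP; [move/subS|move/subL]; by rewrite yL'.
Qed.

Lemma coordD c (u v : V) y : coord (c *: u + v) y = c * coord u y + coord v y.
Proof.
set L := undup (bsupp u ++ bsupp v).
have uL : uniq L by apply: undup_uniq.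
have LB b : b \in L -> Bas b by rewrite mem_undup mem_cat => /orP [/Bas_bsupp|/Bas_bsupp].
have su : {subset bsupp u <= L} by move=> b bL; rewrite mem_undup mem_cat bL.
have sv : {subset bsupp v <= L} by move=> b bL; rewrite mem_undup mem_cat bL orbT.
rewrite (@coord_sum_free L (fun b => c * coord u b + coord v b) _ uL LB); last first.
  rewrite {1}(coord_span uL su) {1}(coord_span uL sv) scaler_sumr -big_split /=.
  by apply: eq_bigr => b _; rewrite scalerDl scalerA.
case: ifP => // /negbT yL; rewrite !coord_out ?mulr0 ?addr0 //; apply/negP.
  by move/sv; rewrite (negbTE yL).
by move/su; rewrite (negbTE yL).
Qed.

Lemma coord_act s (v y : V) : coord (act s v) (act s y) = coord v y.
Proof.
have e : act s v = \sum_(b <- map (act s) (bsupp v)) coord v (act s^-1 b) *: b.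
  rewrite big_map {1}(coord_span (bsupp_uniq v) (fun _ => id)) linear_sum.
  by apply: eq_bigr => b _; rewrite linearZ actK.
have act_s_inj := @act_inj F M n s.
rewrite (coord_sum_free _ _ e) ?mem_map ?map_inj_uniq ?bsupp_uniq ?actK //.
  by case: ifP => // /negbT ys; rewrite coord_out.
by move=> b /mapP [b' /Bas_bsupp bB ->]; apply: Bas_act.
Qed.

Lemma coord_orbitsum (H : {set 'S_n}) (y0 : V) y : Bas y0 ->
  coord (orbitsum H y0) y = (y \in orbseq H y0)%:R.
Proof.
move=> By0; have e : orbitsum H y0 = \sum_(w <- orbseq H y0) (fun _ => 1) w *: w.
  by apply: eq_bigr => w _; rewrite scale1r.
rewrite (coord_sum_free _ _ e) ?orbseq_uniq //; first by case: ifP.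
by move=> b; apply: Bas_orbseq.
Qed.

Lemma orbitsum_decomp (H : {group 'S_n}) (v : V) :
  (forall s, s \in H -> act s v = v) ->
  exists2 Z : seq V, {in Z, forall z, Bas z} & v = \sum_(z <- Z) coord v z *: orbitsum H z.
Proof.
move=> vH; set L := undup (flatten (map (orbseq H) (bsupp v))).
have LP b : reflect (exists2 b', b' \in bsupp v & b \in orbseq H b') (b \in L).
  rewrite mem_undup; apply: (iffP flattenP) => [[s /mapP [b' b's ->] bs]|[b' b's bs]].
    by exists b'.
  by exists (orbseq H b') => //; apply: map_f.
have L_closed b w : b \in L -> w \in orbseq H b -> w \in L.
  by move=> /LP [b' b's bb'] wb; apply/LP; exists b' => //; apply: orbseq_trans bb' wb.
have LB b : b \in L -> Bas b by case/LP => b' /Bas_bsupp; apply: Bas_orbseq.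
have coord_vH s y : s \in H -> coord v (act s y) = coord v y.
  by move=> sH; rewrite -{1}(vH s sH) coord_act.
exists (undup (map (orbrep H) L)).
  by move=> z; rewrite mem_undup => /mapP [b /LB bL ->]; apply: Bas_orbseq (orbrep_in H b).
rewrite {1}(@coord_span L v (undup_uniq _)); last first.
  by move=> b bs; apply/LP; exists b => //; apply: orbseq_id.
rewrite (big_fibers_seq _ (orbrep H)).
apply: eq_big_seq => z; rewrite mem_undup => /mapP [b0 b0L ->].
rewrite -big_filter scaler_sumr (perm_big (orbseq H (orbrep H b0))); last first.
  apply: uniq_perm; rewrite ?filter_uniq ?undup_uniq ?orbseq_uniq // => w.
  rewrite mem_filter; apply/andP/idP => [[/eqP <- _]|wr].
    exact/orbseq_sym/orbrep_in.
  have wb0 : w \in orbseq H b0 by apply: orbseq_trans (orbrep_in H b0) wr.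
  by rewrite (orbrep_eq wb0) eqxx (L_closed _ _ b0L wb0).
by apply: eq_big_seq => w /orbseqP [s sH ->]; rewrite coord_vH.
Qed.

End Coordinates.

Lemma youngInv_decomp (F : fieldType) (M : sigmaModB F) n r (x : Mc M n) : youngInv r x ->
  exists2 Z : seq (Mc M n), {in Z, forall z, Bas z} &
    x = \sum_(z <- Z) coord x z *: orbsum r z.
Proof. exact: orbitsum_decomp (young_group n r) x. Qed.

(** * From beta-operations to gamma-operations *)

Section BetaObjects.
Local Set Strict Implicit.
Variables (F : fieldType) (M : sigmaModB F).

Lemma youngInv0 n r : youngInv r (0 : Mc M n).
Proof. by move=> s _; rewrite raddf0. Qed.

Lemma youngInv_sum n r (I : Type) (L : seq I) (P : pred I) (f : I -> Mc M n) :
  (forall i, P i -> youngInv r (f i)) -> youngInv r (\sum_(i <- L | P i) f i).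
Proof. by move=> h s sH; rewrite raddf_sum; apply: eq_bigr => i Pi; apply: h. Qed.

Lemma youngInvZ n r c (x : Mc M n) : youngInv r x -> youngInv r (c *: x).
Proof. by move=> h s sH; rewrite linearZ /= h. Qed.

Lemma youngInv_orbsum n r (x : Mc M n) : youngInv r (orbsum r x).
Proof. by move=> s; apply: act_orbitsum. Qed.

Variables (A : lmodType F) (b : ops M A).
Hypothesis bB : isBeta b.

Lemma beta_linear n ra c (x y : Mc M n) : sumn (unzip1 ra) = n ->
  youngInv (unzip1 ra) x -> youngInv (unzip1 ra) y ->
  b n (c *: x + y) ra = c *: b n x ra + b n y ra.
Proof. by case: bB => _ [_ [_ [_ [_ b6]]]]; apply: b6. Qed.

Lemma beta0 n ra : sumn (unzip1 ra) = n -> b n 0 ra = 0.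
Proof.
move=> sn; have inv0 := @youngInv0 n (unzip1 ra).
have := @beta_linear n ra 1 0 0 sn inv0 inv0; rewrite scale1r addr0 scale1r => h.
by apply: (addrI (b n 0 ra)); rewrite addr0 -h.
Qed.

Lemma betaZ n ra c (x : Mc M n) : sumn (unzip1 ra) = n -> youngInv (unzip1 ra) x ->
  b n (c *: x) ra = c *: b n x ra.
Proof.
move=> sn ix; have := @beta_linear n ra c x 0 sn ix (@youngInv0 n (unzip1 ra)).
by rewrite !addr0 beta0 // addr0.
Qed.

Lemma beta_sum n ra (I : Type) (L : seq I) (P : pred I) (f : I -> Mc M n) :
  sumn (unzip1 ra) = n -> (forall i, P i -> youngInv (unzip1 ra) (f i)) ->
  b n (\sum_(i <- L | P i) f i) ra = \sum_(i <- L | P i) b n (f i) ra.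
Proof.
move=> sn h; elim: L => [|a L IH]; first by rewrite !big_nil beta0.
rewrite !big_cons; case Pa: (P a) => //.
rewrite -[f a]scale1r beta_linear ?scale1r ?IH //; [exact: h | exact: youngInv_sum].
Qed.

Lemma beta_orbsum_sum n ra (Z : seq (Mc M n)) (c : Mc M n -> F) :
  sumn (unzip1 ra) = n ->
  b n (\sum_(z <- Z) c z *: orbsum (unzip1 ra) z) ra = \sum_(z <- Z) c z *: gammaOf b n z ra.
Proof.
move=> sn; rewrite beta_sum //; last by move=> z _; apply/youngInvZ/youngInv_orbsum.
by apply: eq_bigr => z _; rewrite betaZ //; apply: youngInv_orbsum.
Qed.

End BetaObjects.

Section GammaOfBeta.
Local Set Strict Implicit.
Variables (F : fieldType) (M : sigmaModB F) (A : lmodType F) (b : ops M A).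
Hypothesis bB : isBeta b.

Lemma gammaOf_class n (x : Mc M n) ra s :
  s \in youngS n (unzip1 ra) -> gammaOf b n (act s x) ra = gammaOf b n x ra.
Proof. by move=> sH; rewrite /gammaOf !orbsumE (orbitsum_eq (orbseq_act x sH)). Qed.

Lemma gammaOf_blockperm n (x : Mc M n) ra (rho : 'S_(size ra)) (tau : 'S_n) :
  sumn (unzip1 ra) = n -> is_blockperm rho (unzip1 ra) tau ->
  gammaOf b n x ra = gammaOf b n (act tau x) (permseq rho ra (0%N, 0)).
Proof.
move=> sn bp; rewrite /gammaOf unzip1_permseq (orbsum_blockperm x (size_map _ _) sn bp).
by case: bB => b1 _; apply: b1 => //; apply: youngInv_orbsum.
Qed.

Lemma gammaOf_block0 n (x : Mc M n) a0 ra : sumn (unzip1 ra) = n ->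
  gammaOf b n x ((0%N, a0) :: ra) = gammaOf b n x ra.
Proof.
move=> sn; rewrite /gammaOf /= orbsum_cons0.
by case: bB => _ [b2 _]; apply: b2 => //; apply: youngInv_orbsum.
Qed.

Lemma gammaOf_scale n (x : Mc M n) r1 c a1 ra : sumn (r1 :: unzip1 ra) = n ->
  gammaOf b n x ((r1, c *: a1) :: ra) = c ^+ r1 *: gammaOf b n x ((r1, a1) :: ra).
Proof.
move=> sn; rewrite /gammaOf /=.
by case: bB => _ [_ [b3 _]]; apply: b3 => //; apply: youngInv_orbsum.
Qed.

Lemma gammaOf_repeat n (x : Mc M n) r qa : sumn r = n -> sumn (unzip1 qa) = size r ->
  gammaOf b n x (zip r (flatten [seq nseq p.1 p.2 | p <- qa])) =
  ((#|stab (qrhd (unzip1 qa) r) x| %/ #|stab r x|)%N%:R : F) *: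
    gammaOf b n x (zip (qrhd (unzip1 qa) r) (unzip2 qa)).
Proof.
move=> sn sq; set r' := qrhd (unzip1 qa) r.
have r'E : unzip1 (zip r' (unzip2 qa)) = r' by rewrite unzip1_zip // size_qrhd !size_map.
rewrite /gammaOf unzip1_zip ?size_flatten_nseq ?sq // r'E.
case: bB => _ [_ [_ [b4 _]]]; rewrite b4 //; last exact: youngInv_orbsum.
rewrite cosetsum_orbsum ?youngS_qrhd // betaZ ?r'E ?sumn_qrhd ?sq //.
exact: youngInv_orbsum.
Qed.

Lemma gammaOf_split n (x : Mc M n) r1 a0 a1 ra : sumn (r1 :: unzip1 ra) = n ->
  gammaOf b n x ((r1, a0 + a1) :: ra) =
  \sum_(l < r1.+1)
    \sum_(C in orbclasses (val l :: (r1 - l)%N :: unzip1 ra) (r1 :: unzip1 ra) x)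
      gammaOf b n (act (repr C) x) ((val l, a0) :: (r1 - l, a1)%N :: ra).
Proof.
move=> sn; case: bB => _ [_ [_ [_ [b5 _]]]].
rewrite /gammaOf /= b5 //; last exact: youngInv_orbsum.
apply: eq_bigr => l _; have lr : (l <= r1)%N by rewrite -ltnS ltn_ord.
rewrite (orbsum_refine _ _ lr) beta_sum //=; last by move=> C _; apply: youngInv_orbsum.
by rewrite addnA subnKC.
Qed.

Lemma isGamma_gammaOf : isGamma (gammaOf b).
Proof.
split; first by move=> n x ra s _ _; apply: gammaOf_class.
split; first by move=> n x ra rho tau sn _; apply: gammaOf_blockperm.
split; first by move=> n x a0 ra sn _; apply: gammaOf_block0.
split; first by move=> n x r1 c a1 ra sn _; apply: gammaOf_scale.
split; first by move=> n x r qa sn sq _; apply: gammaOf_repeat.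
by move=> n x r1 a0 a1 ra sn _; apply: gammaOf_split.
Qed.

End GammaOfBeta.

Section Morphisms.
Local Set Strict Implicit.
Variables (F : fieldType) (M : sigmaModB F).

Lemma beta_expansion n r (x : Mc M n) : youngInv r x ->
  exists2 Z : seq (Mc M n), {in Z, forall z, Bas z} &
    forall (A : lmodType F) (b : ops M A) ra, isBeta b -> unzip1 ra = r -> sumn r = n ->
      b n x ra = \sum_(z <- Z) coord x z *: gammaOf b n z ra.
Proof.
move=> ix; have [Z ZB ex] := youngInv_decomp ix.
by exists Z => // A b ra bB rE sn; rewrite {1}ex -beta_orbsum_sum ?rE.
Qed.

Lemma isGammaMor_gammaOf (A A' : lmodType F) (b : ops M A) (b' : ops M A') (f : A -> A') :
  isBetaMor b b' f -> isGammaMor (gammaOf b) (gammaOf b') f.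
Proof.
move=> bf n x ra sn _; rewrite /gammaOf unzip1_fargs.
by apply: bf => //; apply: youngInv_orbsum.
Qed.

Lemma isBetaMor_gammaOf (A A' : lmodType F) (b : ops M A) (b' : ops M A')
    (f : {linear A -> A'}) :
  isBeta b -> isBeta b' -> isGammaMor (gammaOf b) (gammaOf b') f -> isBetaMor b b' f.
Proof.
move=> bB bB' gf n x ra sn ix; have [Z ZB ex] := beta_expansion ix.
rewrite ex // ex ?unzip1_fargs // linear_sum; apply: eq_big_seq => z zZ.
by rewrite linearZ /= gf //; apply: ZB.
Qed.

Lemma gammaOf_inj (A : lmodType F) (b1 b2 : ops M A) : isBeta b1 -> isBeta b2 ->
  (forall n (x : Mc M n) ra, sumn (unzip1 ra) = n -> Bas x ->
     gammaOf b1 n x ra = gammaOf b2 n x ra) ->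
  forall n (x : Mc M n) ra, sumn (unzip1 ra) = n -> youngInv (unzip1 ra) x ->
     b1 n x ra = b2 n x ra.
Proof.
move=> bB1 bB2 e n x ra sn ix; have [Z ZB ex] := beta_expansion ix.
by rewrite !ex //; apply: eq_big_seq => z zZ; rewrite e //; apply: ZB.
Qed.

End Morphisms.

(** * From gamma-operations to beta-operations *)

Section BetaOfGamma.
Local Set Strict Implicit.
Variables (F : fieldType) (M : sigmaModB F) (A : lmodType F) (g : ops M A).
Hypothesis gG : isGamma g.

(* Only the chosen representative of each Sigma_r-orbit carries the value of g, so
   that an orbit sum, whose coordinates are all 1, picks up g exactly once. *)
Definition gamma_rep n ra (y : Mc M n) : A :=
  if orbrep (young_group n (unzip1 ra)) y == y then g n y ra else 0.

Definition betaOf_at n ra (x : Mc M n) : A :=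
  \sum_(y <- bsupp x) coord x y *: gamma_rep n ra y.

Lemma betaOf_atE n ra (x : Mc M n) (L : seq (Mc M n)) :
  uniq L -> {subset bsupp x <= L} ->
  betaOf_at n ra x = \sum_(y <- L) coord x y *: gamma_rep n ra y.
Proof.
move=> uL sub; symmetry; apply: big_uniq_subset => //; first exact: bsupp_uniq.
by move=> y _ ys; rewrite coord_out // scale0r.
Qed.

Fact betaOf_at_is_linear n ra : linear (betaOf_at n ra).
Proof.
move=> c x x'; set L := undup (bsupp x ++ bsupp x' ++ bsupp (c *: x + x')).
have uL : uniq L by apply: undup_uniq.
have s1 : {subset bsupp x <= L} by move=> y ys; rewrite mem_undup mem_cat ys.
have s2 : {subset bsupp x' <= L} by move=> y ys; rewrite mem_undup !mem_cat ys orbT.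
have s3 : {subset bsupp (c *: x + x') <= L}.
  by move=> y ys; rewrite mem_undup !mem_cat ys !orbT.
rewrite (betaOf_atE n ra _ uL s1) (betaOf_atE n ra _ uL s2)
  (betaOf_atE n ra _ uL s3) scaler_sumr -big_split.
by apply: eq_bigr => y _; rewrite coordD scalerDl scalerA.
Qed.
HB.instance Definition _ n ra :=
  GRing.isLinear.Build F (Mc M n) A _ (betaOf_at n ra) (betaOf_at_is_linear n ra).

Definition betaOf : ops M A := fun n x ra => betaOf_at n ra x.

Lemma betaOfZ n ra c (x : Mc M n) : betaOf n (c *: x) ra = c *: betaOf n x ra.
Proof. exact: linearZ_LR. Qed.

Lemma betaOf_sum n ra (I : Type) (s : seq I) (P : pred I) (f : I -> Mc M n) :
  betaOf n (\sum_(i <- s | P i) f i) ra = \sum_(i <- s | P i) betaOf n (f i) ra.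
Proof. exact: linear_sum. Qed.

Lemma betaOf_orbsum {n ra r} {y0 : Mc M n} : unzip1 ra = r -> sumn r = n -> Bas y0 ->
  betaOf n (orbsum r y0) ra = g n y0 ra.
Proof.
move=> <- sn By0; set H := young_group n (unzip1 ra).
have coordO y : coord (orbsum (unzip1 ra) y0) y = (y \in orbseq H y0)%:R.
  exact: coord_orbitsum.
set L := undup (bsupp (orbsum (unzip1 ra) y0) ++ orbseq H y0).
rewrite /betaOf (@betaOf_atE n ra _ L) ?undup_uniq //; last first.
  by move=> y ys; rewrite mem_undup mem_cat ys.
rewrite (big_uniq_subset (orbseq_uniq H y0)) ?undup_uniq //; first last.
- by move=> y _ yO; rewrite coordO (negbTE yO) scale0r.
- by move=> y ys; rewrite mem_undup mem_cat ys orbT.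
rewrite (eq_big_seq (gamma_rep n ra)) => [|y yO]; last by rewrite coordO yO scale1r.
rewrite /gamma_rep -big_mkcond /= -big_filter.
rewrite (@eq_in_filter _ _ (pred1 (orbrep H y0))) => [|y yO /=]; last first.
  by rewrite (orbrep_eq yO) eq_sym.
rewrite filter_pred1_uniq ?orbseq_uniq ?orbrep_in // big_seq1.
by case/orbseqP: (orbrep_in H y0) => s sH ->; case: gG => wd _; apply: wd.
Qed.

Lemma betaOf_orbsum_sum {n ra r} {I : eqType} {Z : seq I} {c : I -> F} {y : I -> Mc M n} :
  unzip1 ra = r -> sumn r = n -> {in Z, forall i, Bas (y i)} ->
  betaOf n (\sum_(i <- Z) c i *: orbsum r (y i)) ra = \sum_(i <- Z) c i *: g n (y i) ra.
Proof.
move=> <- sn yB; rewrite betaOf_sum; apply: eq_big_seq => i iZ.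
by rewrite betaOfZ (betaOf_orbsum erefl sn) //; apply: yB.
Qed.

Lemma betaOf_blockperm n (x : Mc M n) ra (rho : 'S_(size ra)) (tau : 'S_n) :
  sumn (unzip1 ra) = n -> youngInv (unzip1 ra) x -> is_blockperm rho (unzip1 ra) tau ->
  betaOf n x ra = betaOf n (act tau x) (permseq rho ra (0%N, 0)).
Proof.
move=> sn ix bp; have [Z ZB ex] := youngInv_decomp ix.
set ra' := permseq rho ra (0%N, 0).
have sn' : sumn (unzip1 ra') = n by rewrite unzip1_permseq sumn_permseq ?size_map.
have ex' : act tau x = \sum_(z <- Z) coord x z *: orbsum (unzip1 ra') (act tau z).
  rewrite {1}ex linear_sum; apply: eq_bigr => z _.
  by rewrite linearZ /= unzip1_permseq (orbsum_blockperm _ (size_map _ _) sn bp).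
rewrite {1}ex ex' (betaOf_orbsum_sum (y := id) _ sn ZB) //.
rewrite (betaOf_orbsum_sum (y := act tau)) //; last first.
  by move=> z /ZB; apply: Bas_act.
by apply: eq_big_seq => z /ZB Bz; case: gG => _ [g1 _]; rewrite -g1.
Qed.

Lemma betaOf_block0 n (x : Mc M n) a0 ra : sumn (unzip1 ra) = n ->
  youngInv (unzip1 ra) x -> betaOf n x ((0%N, a0) :: ra) = betaOf n x ra.
Proof.
move=> sn ix; have [Z ZB ex] := youngInv_decomp ix.
have ex0 : x = \sum_(z <- Z) coord x z *: orbsum (0%N :: unzip1 ra) z.
  by rewrite {1}ex; apply: eq_bigr => z _; rewrite orbsum_cons0.
rewrite [in LHS]ex0 [in RHS]ex !(betaOf_orbsum_sum (y := id) _ _ ZB) //.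
by apply: eq_big_seq => z /ZB Bz; case: gG => _ [_ [g2 _]]; rewrite g2.
Qed.

Lemma betaOf_scale n (x : Mc M n) r1 c a1 ra : sumn (r1 :: unzip1 ra) = n ->
  youngInv (r1 :: unzip1 ra) x ->
  betaOf n x ((r1, c *: a1) :: ra) = c ^+ r1 *: betaOf n x ((r1, a1) :: ra).
Proof.
move=> sn ix; have [Z ZB ex] := youngInv_decomp ix.
rewrite ex !(betaOf_orbsum_sum (y := id) _ _ ZB) // scaler_sumr.
apply: eq_big_seq => z /ZB Bz; case: gG => _ [_ [_ [g3 _]]].
by rewrite g3 // !scalerA mulrC.
Qed.

Lemma betaOf_repeat n (x : Mc M n) r qa : sumn r = n -> sumn (unzip1 qa) = size r ->
  youngInv r x ->
  betaOf n x (zip r (flatten [seq nseq p.1 p.2 | p <- qa])) =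
  betaOf n (cosetsum r (qrhd (unzip1 qa) r) x) (zip (qrhd (unzip1 qa) r) (unzip2 qa)).
Proof.
move=> sn sq ix; have [Z ZB ex] := youngInv_decomp ix.
set r' := qrhd (unzip1 qa) r; set fl := flatten _.
have rE : unzip1 (zip r fl) = r by rewrite unzip1_zip // size_flatten_nseq sq.
have r'E : unzip1 (zip r' (unzip2 qa)) = r' by rewrite unzip1_zip // size_qrhd !size_map.
pose k (z : Mc M n) : F := (#|stab r' z| %/ #|stab r z|)%N%:R.
have exc : cosetsum r r' x = \sum_(z <- Z) (coord x z * k z) *: orbsum r' z.
  rewrite {1}ex /cosetsum; under eq_bigr do rewrite linear_sum.
  rewrite exchange_big /=; apply: eq_bigr => z _.
  under eq_bigr do rewrite linearZ.
  rewrite -scaler_sumr -[\sum_(_ in _) _]/(cosetsum r r' (orbsum r z)).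
  by rewrite cosetsum_orbsum ?youngS_qrhd // scalerA.
rewrite exc {1}ex !(betaOf_orbsum_sum (y := id) _ _ ZB) ?sumn_qrhd ?sq //.
apply: eq_big_seq => z /ZB Bz; case: gG => _ [_ [_ [_ [g4 _]]]].
by rewrite g4 // scalerA.
Qed.

Lemma betaOf_split n (x : Mc M n) r1 a0 a1 ra : sumn (r1 :: unzip1 ra) = n ->
  youngInv (r1 :: unzip1 ra) x ->
  betaOf n x ((r1, a0 + a1) :: ra) =
  \sum_(l < r1.+1) betaOf n x ((val l, a0) :: (r1 - l, a1)%N :: ra).
Proof.
move=> sn ix; have [Z ZB ex] := youngInv_decomp ix.
have sn' (l : 'I_r1.+1) : sumn (val l :: (r1 - l)%N :: unzip1 ra) = n.
  by rewrite -sn /= addnA subnKC // -ltnS.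
rewrite {1}ex (betaOf_orbsum_sum (y := id) _ sn ZB) //.
case: gG => _ [_ [_ [_ [_ g5]]]].
under eq_big_seq => z /ZB Bz do rewrite g5 // scaler_sumr.
rewrite exchange_big /=; apply: eq_bigr => l _.
rewrite [in RHS]ex betaOf_sum; apply: eq_big_seq => z /ZB Bz.
have lr : (l <= r1)%N by rewrite -ltnS.
rewrite betaOfZ (orbsum_refine _ _ lr) betaOf_sum; congr (_ *: _).
by apply: eq_bigr => C _; rewrite (betaOf_orbsum _ (sn' l)) //; apply: Bas_act.
Qed.

Lemma isBeta_betaOf : isBeta betaOf.
Proof.
split; first by move=> *; apply: betaOf_blockperm.
split; first by move=> *; apply: betaOf_block0.
split; first by move=> *; apply: betaOf_scale.
split; first by move=> *; apply: betaOf_repeat.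
split; first by move=> *; apply: betaOf_split.
by move=> n x y c ra _ _ _; apply: linearP.
Qed.

Lemma gammaOf_betaOf n (x : Mc M n) ra : sumn (unzip1 ra) = n -> Bas x ->
  g n x ra = gammaOf betaOf n x ra.
Proof. by move=> sn Bx; rewrite /gammaOf (betaOf_orbsum erefl sn). Qed.

End BetaOfGamma.

Theorem proposition4p8 (F : fieldType) (M : sigmaModB F) :
  (* P_M sends objects of beta(M) to objects of gamma(M) *)
  (forall (A : lmodType F) (b : ops M A), isBeta b -> isGamma (gammaOf b))
  (* P_M (identity) sends morphisms to morphisms *)
  /\ (forall (A A' : lmodType F) (b : ops M A) (b' : ops M A') (f : {linear A -> A'}),
        isBeta b -> isBeta b' -> isBetaMor b b' f ->
        isGammaMor (gammaOf b) (gammaOf b') f)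
  (* P_M is full: hom-sets are mapped onto *)
  /\ (forall (A A' : lmodType F) (b : ops M A) (b' : ops M A') (f : {linear A -> A'}),
        isBeta b -> isBeta b' -> isGammaMor (gammaOf b) (gammaOf b') f ->
        isBetaMor b b' f)
  (* P_M is injective on objects *)
  /\ (forall (A : lmodType F) (b1 b2 : ops M A), isBeta b1 -> isBeta b2 ->
        (forall n (x : Mc M n) ra, sumn (unzip1 ra) = n -> Bas x ->
           gammaOf b1 n x ra = gammaOf b2 n x ra) ->
        forall n (x : Mc M n) ra, sumn (unzip1 ra) = n -> youngInv (unzip1 ra) x ->
           b1 n x ra = b2 n x ra)
  (* P_M is surjective on objects *)
  /\ (forall (A : lmodType F) (g : ops M A), isGamma g ->
        exists2 b : ops M A, isBeta b &
          forall n (x : Mc M n) ra, sumn (unzip1 ra) = n -> Bas x ->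
            g n x ra = gammaOf b n x ra).
Proof.
split; first exact: isGamma_gammaOf.
split; first by move=> A A' b b' f _ _; apply: isGammaMor_gammaOf.
split; first exact: isBetaMor_gammaOf.
split; first exact: gammaOf_inj.
move=> A g gG; exists (betaOf g); first exact: isBeta_betaOf.
exact: gammaOf_betaOf.
Qed.
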